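(* Let $G=(V_G,E_G)$ be a graph with $N$ vertices such that $\frac{\mathcal{E}(N)}{N}\ge\frac{\mathcal{E}(n)}{n}$ for all $0<n<N$, let $g\ge0$ and $H$ the transverse-field Ising Hamiltonian on $G$. Then $\min_{0\le n<N}\frac{\mathcal{E}(N)-\mathcal{E}(n)}{N-n}=\frac{\mathcal{E}(N)}{N}$, and $$\min_{|\varphi\rangle\text{ stabilizer state}}\langle\varphi|H|\varphi\rangle=\begin{cases}-\mathcal{E}(N)&\text{if } g\le \mathcal{E}(N)/N,\\ -gN&\text{if } g\ge \mathcal{E}(N)/N.\end{cases}$$
   Context: A graph $G=(V_G,E_G)$ is finite, simple and undirected, with $V_G=\{q_0,\dots,q_{N-1}\}$, vertex $q_i$ corresponding to qubit $i$. For $S\subseteq V_G$, $E(S)$ is the set of edges with both endpoints in $S$. The edge-function is $\mathcal{E}(n)=\max\{|E(S)|: S\subseteq V_G,\ |S|\le n\}$ (so $\mathcal{E}(N)=|E_G|$). The transverse-field Ising Hamiltonian on $G$ is $H=-\sum_{\langle q_i,q_j\rangle\in E_G}Z_iZ_j-g\sum_{q_i\in V_G}X_i$; stabilizer states are $N$-qubit states whose stabilizer group consists of $2^N$ Pauli-group elements. *)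

From HB Require Import structures.
From mathcomp Require Import all_boot all_order all_algebra.
From mathcomp Require Import complex reals.
Set Implicit Arguments. Unset Strict Implicit. Unset Printing Implicit Defensive.
Import Order.TTheory GRing.Theory Num.Theory.
Local Open Scope ring_scope.

Definition simple_graph (N : nat) (e : rel 'I_N) : Prop :=
  (forall i j, e i j = e j i) /\ (forall i, ~~ e i i).

(* The edge set, each unordered edge {i,j} represented once as (i,j) with i<j. *)
Definition edges (N : nat) (e : rel 'I_N) : {set 'I_N * 'I_N} :=
  [set p : 'I_N * 'I_N | (p.1 < p.2)%N && e p.1 p.2].

Definition edges_in (N : nat) (e : rel 'I_N) (S : {set 'I_N}) : {set 'I_N * 'I_N} :=
  [set p : 'I_N * 'I_N in edges e | (p.1 \in S) && (p.2 \in S)].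

Definition edgefun (N : nat) (e : rel 'I_N) (n : nat) : nat :=
  \max_(S : {set 'I_N} | (#|S| <= n)%N) #|edges_in e S|.

Definition bits (N : nat) := {ffun 'I_N -> bool}.

(* State vectors in (C^2)^{(x)N}, as amplitude functions on the basis. *)
Definition qstate (R : realType) (N : nat) := {ffun bits N -> R[i]}.

Definition bxor (N : nat) (c x : bits N) : bits N := [ffun k => c k (+) x k].
Definition bdot (N : nat) (z b : bits N) : nat := (\sum_k (z k && b k))%N.

(* Pauli-group elements  i^k X^x Z^z  (k : 'I_4, x z : bit strings);
   every element of the N-qubit Pauli group has exactly one such form. *)
Definition pauli (N : nat) := ('I_4 * bits N * bits N)%type.

Definition pauli_act (R : realType) (N : nat) (P : pauli N) (phi : qstate R N)
  : qstate R N :=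
  let: (k, x, z) := P in
  [ffun c => ('i : R[i]) ^+ k * (-1) ^+ (bdot z (bxor c x)) * phi (bxor c x)].

Definition unit_bits (N : nat) (j : 'I_N) : bits N := [ffun k => k == j].

Definition Xop (R : realType) (N : nat) (j : 'I_N) (phi : qstate R N) : qstate R N :=
  pauli_act (ord0, unit_bits j, [ffun _ => false]) phi.
Definition Zop (R : realType) (N : nat) (j : 'I_N) (phi : qstate R N) : qstate R N :=
  pauli_act (ord0, [ffun _ => false], unit_bits j) phi.

Definition inner (R : realType) (N : nat) (phi psi : qstate R N) : R[i] :=
  \sum_b ((phi b)^* * psi b)%C.

Definition stab_group (R : realType) (N : nat) (phi : qstate R N) : {set pauli N} :=
  [set P | pauli_act P phi == phi].

Definition stabilizer_state (R : realType) (N : nat) (phi : qstate R N) : Prop :=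
  inner phi phi = 1 /\ #|stab_group phi| = (2 ^ N)%N.

Definition ising_H (R : realType) (N : nat) (e : rel 'I_N) (g : R)
  (phi : qstate R N) : qstate R N :=
  - (\sum_(p in edges e) Zop p.1 (Zop p.2 phi)) - (g%:C)%C *: \sum_j Xop j phi.

Definition energy (R : realType) (N : nat) (e : rel 'I_N) (g : R) (phi : qstate R N)
  : R[i] := inner phi (ising_H e g phi).

Definition is_min_stab_energy (R : realType) (N : nat) (e : rel 'I_N) (g v : R)
  : Prop :=
  (exists2 phi : qstate R N, stabilizer_state phi & energy e g phi = (v%:C)%C) /\
  (forall phi : qstate R N, stabilizer_state phi -> ((v%:C)%C <= energy e g phi)).

From HB Require Import structures.
From mathcomp Require Import all_boot all_order all_algebra.
From mathcomp Require Import complex reals.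
Set Implicit Arguments. Unset Strict Implicit. Unset Printing Implicit Defensive.
Import Order.TTheory GRing.Theory Num.Theory.
Local Open Scope ring_scope.

(* A stabilizer state is an eigenvector of every Pauli operator with nonzero
   expectation: its 2^N stabilizers have expectations of modulus one, while the
   squared expectations of all 4^N Pauli operators sum to 2^N (Parseval for the
   Walsh transform), so all other expectations vanish.  Hence every <X_j> and
   <Z_p Z_q> lies in {0, 1, -1}, and <X_j> <> 0 forces <Z_p Z_q> = 0 on every
   edge at j, the two operators anticommuting.  With B the set of qubits where
   <X_j> = 0, the energy is at least -|E(B)| - g (N - |B|) >= -E(m) - g (N - m)
   for m = |B|, which the density hypothesis E(m) <= m E(N)/N bounds below by
   -N max (E(N)/N, g).  The states |0...0> and |+...+> attain -E(N) and -gN. *)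

Section Bits.
Variable N : nat.
Implicit Types c d x y z : bits N.

Definition bzero : bits N := [ffun => false].

Lemma bxorK x c : bxor (bxor c x) x = c.
Proof. by apply/ffunP=> k; rewrite !ffunE addbK. Qed.

Lemma bxorC c x : bxor c x = bxor x c.
Proof. by apply/ffunP=> k; rewrite !ffunE addbC. Qed.

Lemma bxorx0 c : bxor c bzero = c.
Proof. by apply/ffunP=> k; rewrite !ffunE addbF. Qed.

Lemma bxor_eq0 c d : (bxor c d == bzero) = (c == d).
Proof.
apply/eqP/eqP => [cd0|->]; last by apply/ffunP=> k; rewrite !ffunE addbb.
by rewrite -(bxorK d c) cd0 bxorC bxorx0.
Qed.

Lemma sum_bxor (V : nmodType) (F : bits N -> V) x :
  \sum_c F (bxor c x) = \sum_c F c.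
Proof.
have bxor_inj : injective (fun c => bxor c x).
  exact: (can_inj (g := fun c => bxor c x) (bxorK x)).
by rewrite [RHS](reindex_inj bxor_inj).
Qed.

Lemma card_bits : #|{: bits N}| = (2 ^ N)%N.
Proof. by rewrite card_ffun card_bool card_ord. Qed.

Lemma bdotC z c : bdot z c = bdot c z.
Proof. by apply: eq_bigr => k _; rewrite andbC. Qed.

Lemma bdot0l c : bdot bzero c = 0%N.
Proof. by rewrite /bdot big1 // => k _; rewrite ffunE. Qed.

Lemma bdot0r c : bdot c bzero = 0%N.
Proof. by rewrite bdotC bdot0l. Qed.

Lemma bdot_unitl j c : bdot (unit_bits j) c = c j.
Proof.
rewrite /bdot (bigD1 j) //= big1 ?addn0 => [|k /negbTE kj]; rewrite ffunE ?eqxx //.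
by rewrite kj.
Qed.

Lemma bdot_unitr z j : bdot z (unit_bits j) = z j.
Proof. by rewrite bdotC bdot_unitl. Qed.

Lemma sign_bdotDl (A : comPzRingType) y w c :
  (-1) ^+ bdot (bxor y w) c = (-1) ^+ bdot y c * (-1) ^+ bdot w c :> A.
Proof.
rewrite /bdot !expr_sum -big_split /=; apply: eq_bigr => k _.
by rewrite ffunE andb_addl signr_addb.
Qed.

Lemma sign_bdotDr (A : comPzRingType) z c x :
  (-1) ^+ bdot z (bxor c x) = (-1) ^+ bdot z c * (-1) ^+ bdot z x :> A.
Proof. by rewrite !(bdotC z) sign_bdotDl. Qed.

Lemma sum_sign_bdot (A : numDomainType) w :
  \sum_z (-1) ^+ bdot z w = (w == bzero)%:R * (2 ^ N)%:R :> A.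
Proof.
have [->|w_neq0] := eqVneq w bzero.
  under eq_bigr do rewrite bdot0r.
  by rewrite sumr_const card_bits mul1r.
have [j wj] : exists j, w j.
  apply/existsP; apply: contraNT w_neq0 => /existsPn w0.
  by apply/eqP/ffunP=> k; rewrite ffunE; exact/negbTE/w0.
set S := \sum_z _; have S_opp : S = - S.
  (* translating z by the j-th unit vector flips every sign *)
  rewrite {1}/S -(sum_bxor _ (unit_bits j)) -sumrN; apply: eq_bigr => z _.
  by rewrite sign_bdotDl bdot_unitl wj expr1 mulrN1.
have : S *+ 2 == 0 by rewrite mulr2n {2}S_opp subrr.
by rewrite mulrn_eq0 mul0r => /eqP.
Qed.

Lemma walsh_parseval (C : numClosedFieldType) (h : bits N -> C) :
  \sum_z `|\sum_d h d * (-1) ^+ bdot z d| ^+ 2 = (2 ^ N)%:R * \sum_d `|h d| ^+ 2.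
Proof.
under eq_bigr do rewrite normCK rmorph_sum mulr_suml.
rewrite exchange_big mulr_sumr; apply: eq_bigr => d _.
under eq_bigr do rewrite mulr_sumr.
rewrite exchange_big (bigD1 d) //= [X in _ + X]big1 ?addr0 => [|d' d'd].
  under eq_bigr do rewrite rmorphM rmorph_sign mulrACA -expr2 sqrr_sign mulr1.
  by rewrite sumr_const card_bits -normCK mulr_natl.
under eq_bigr do rewrite rmorphM rmorph_sign mulrACA -sign_bdotDr.
by rewrite -mulr_sumr sum_sign_bdot bxor_eq0 eq_sym (negbTE d'd) !mul0r mulr0.
Qed.
End Bits.

Lemma ipow_conjK (C : numClosedFieldType) (k : nat) : ('i ^+ k)^* * 'i ^+ k = 1 :> C.
Proof. by rewrite -normCKC normrX normCi !expr1n. Qed.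

Lemma imaginary_prim_root (C : numClosedFieldType) : 4.-primitive_root ('i : C).
Proof.
have [i_neq1 i_neqN1] : ('i : C) != 1 /\ ('i : C) != -1.
  split; apply/eqP => i_pm1; move: (oner_neq0 C);
  by rewrite -eqNr -sqrCi i_pm1 ?sqrrN expr1n eqxx.
have i4 : ('i : C) ^+ 4 = 1 by rewrite -[4%N]/(2 * 2)%N exprM sqrCi sqrrN expr1n.
apply/andP; split => //; apply/forallP => -[[|[|[|[|//]]]] //= _]; rewrite unity_rootE.
- by rewrite expr1 (negbTE i_neq1).
- by rewrite sqrCi eqNr oner_eq0.
- by rewrite exprS sqrCi mulrN1 (eqr_oppLR 'i) (negbTE i_neqN1).
- by apply/eqP/eqP; exact: i4.
Qed.

Lemma ipow_inj (C : numClosedFieldType) : injective (fun k : 'I_4 => 'i ^+ k : C).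
Proof.
move=> k1 k2 /= /eqP; rewrite (eq_prim_root_expr (imaginary_prim_root C)) !modn_small //.
by move=> /eqP k12; apply: val_inj.
Qed.

Section Pauli.
Variables (R : realType) (N : nat).
Local Notation C := R[i].
Implicit Types (phi psi : qstate R N) (c d x z : bits N).

Lemma scaleCE (a b : C) : a *: b = a * b.
Proof. by []. Qed.

Lemma pauli_act0E x z psi :
  pauli_act (ord0, x, z) psi = [ffun c => (-1) ^+ bdot z (bxor c x) * psi (bxor c x)].
Proof. by apply/ffunP=> c; rewrite !ffunE expr0 mul1r. Qed.

Lemma pauli_act_phase k x z psi :
  pauli_act (k, x, z) psi = 'i ^+ k *: pauli_act (ord0, x, z) psi.
Proof. by apply/ffunP=> c; rewrite !ffunE expr0 mul1r -mulrA. Qed.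

Lemma pauli_actZ P a psi : pauli_act P (a *: psi) = a *: pauli_act P psi.
Proof.
case: P => [[k x] z]; apply/ffunP=> c; rewrite !ffunE !scaleCE; exact: mulrCA.
Qed.

Lemma pauli_act_sqr x z psi :
  pauli_act (ord0, x, z) (pauli_act (ord0, x, z) psi) = (-1) ^+ bdot z x *: psi.
Proof.
apply/ffunP=> c; rewrite !pauli_act0E !ffunE bxorK sign_bdotDr.
by rewrite mulrACA -expr2 sqrr_sign mul1r.
Qed.

Lemma pauli_act_XZ x z psi :
  pauli_act (ord0, x, bzero N) (pauli_act (ord0, bzero N, z) psi)
  = (-1) ^+ bdot z x *: pauli_act (ord0, bzero N, z) (pauli_act (ord0, x, bzero N) psi).
Proof.
apply/ffunP=> c; rewrite !pauli_act0E !ffunE !bxorx0 !bdot0l expr0 !mul1r.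
by rewrite scaleCE sign_bdotDr mulrCA mulrA.
Qed.

Lemma innerZr phi a psi : inner phi (a *: psi) = a * inner phi psi.
Proof.
by rewrite /inner mulr_sumr; apply: eq_bigr => b _; rewrite ffunE scaleCE mulrCA.
Qed.

Lemma innerDr phi psi1 psi2 : inner phi (psi1 + psi2) = inner phi psi1 + inner phi psi2.
Proof. by rewrite /inner -big_split; apply: eq_bigr => b _; rewrite ffunE mulrDr. Qed.

Lemma innerNr phi psi : inner phi (- psi) = - inner phi psi.
Proof. by rewrite /inner -sumrN; apply: eq_bigr => b _; rewrite ffunE mulrN. Qed.

Lemma inner_sumr phi (I : finType) (P : pred I) (F : I -> qstate R N) :
  inner phi (\sum_(i | P i) F i) = \sum_(i | P i) inner phi (F i).
Proof.
rewrite /inner exchange_big /=; apply: eq_bigr => b _.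
by rewrite sum_ffunE mulr_sumr.
Qed.

Lemma inner_selfE phi : inner phi phi = \sum_c `|phi c| ^+ 2.
Proof. by apply: eq_bigr => c _; rewrite normCKC. Qed.

Lemma normalized_neq0 phi : inner phi phi = 1 -> phi != 0.
Proof.
move=> phi1; apply: contra_eq_neq phi1 => ->.
by rewrite /inner big1 ?(eq_sym 0) ?oner_eq0 // => c _; rewrite ffunE mulr0.
Qed.

Definition pauli_expect phi x z : C := inner phi (pauli_act (ord0, x, z) phi).

Lemma pauli_expectE phi x z :
  pauli_expect phi x z = \sum_d ((phi (bxor d x))^* * phi d) * (-1) ^+ bdot z d.
Proof.
rewrite /pauli_expect /inner -(sum_bxor _ x); apply: eq_bigr => d _.
by rewrite pauli_act0E ffunE bxorK mulrA mulrAC.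
Qed.

Lemma sum_pauli_expect_sqr phi :
  \sum_x \sum_z `|pauli_expect phi x z| ^+ 2 = (2 ^ N)%:R * inner phi phi ^+ 2.
Proof.
under eq_bigr do under eq_bigr do rewrite pauli_expectE.
under eq_bigr do rewrite walsh_parseval.
rewrite -mulr_sumr inner_selfE expr2 mulr_suml exchange_big; congr (_ * _).
apply: eq_bigr => d _; rewrite mulr_sumr -[RHS](sum_bxor _ d); apply: eq_bigr => x _.
by rewrite normrM norm_conjC exprMn mulrC bxorC.
Qed.

Definition pauli_xz (P : pauli N) : bits N * bits N := (P.1.2, P.2).

Lemma stab_group_eigen phi k x z :
  (k, x, z) \in stab_group phi -> pauli_act (ord0, x, z) phi = ('i ^+ k)^* *: phi.
Proof.
rewrite inE => /eqP stab; rewrite pauli_act_phase in stab.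
by rewrite -[in RHS]stab scalerA ipow_conjK scale1r.
Qed.

Lemma pauli_expect_stab phi k x z : inner phi phi = 1 ->
  (k, x, z) \in stab_group phi -> pauli_expect phi x z = ('i ^+ k)^*.
Proof.
by rewrite /pauli_expect => phi1 /stab_group_eigen ->; rewrite innerZr phi1 mulr1.
Qed.

Lemma stab_group_xz_inj phi : phi != 0 -> {in stab_group phi &, injective pauli_xz}.
Proof.
move=> phi_neq0 [[k1 x1] z1] [[k2 x2] z2] /stab_group_eigen eig1 /stab_group_eigen eig2.
move=> /= [ex ez]; subst x2 z2.
have : (('i ^+ k1)^* - ('i ^+ k2)^*) *: phi == 0 by rewrite scalerBl -eig1 -eig2 subrr.
rewrite scaler_eq0 (negbTE phi_neq0) orbF subr_eq0 => /eqP /(can_inj conjCK).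
by move=> /ipow_inj ->.
Qed.

Lemma pauli_expect_sqr_split phi : inner phi phi = 1 ->
  (2 ^ N)%:R = #|stab_group phi|%:R
    + \sum_(p | p \notin pauli_xz @: stab_group phi) `|pauli_expect phi p.1 p.2| ^+ 2 :> C.
Proof.
move=> phi1; have := sum_pauli_expect_sqr phi; rewrite phi1 expr1n mulr1 => <-.
rewrite pair_big (bigID (mem (pauli_xz @: stab_group phi))) /=; congr (_ + _).
rewrite -(card_in_imset (stab_group_xz_inj (normalized_neq0 phi1))) -sumr_const.
apply: eq_bigr => _ /imsetP [[[k x] z] stab ->] /=.
by rewrite (pauli_expect_stab phi1 stab) norm_conjC normrX normCi !expr1n.
Qed.

Lemma card_stab_group_le phi : inner phi phi = 1 -> (#|stab_group phi| <= 2 ^ N)%N.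
Proof.
move=> /pauli_expect_sqr_split sqr_split; rewrite -(ler_nat C) sqr_split lerDl.
by apply: sumr_ge0 => p _; rewrite exprn_ge0.
Qed.

Lemma expect_neq0_in_stab_group phi x z : stabilizer_state phi ->
  pauli_expect phi x z != 0 -> exists k, (k, x, z) \in stab_group phi.
Proof.
move=> [phi1 card_stab] expect_neq0.
suff /imsetP [[[k x'] z'] stab [-> ->]] : (x, z) \in pauli_xz @: stab_group phi.
  by exists k.
apply: contraNT expect_neq0 => xz_notin.
have /eqP := pauli_expect_sqr_split phi1.
rewrite card_stab -{1}[_%:R]addr0 (inj_eq (addrI _)) eq_sym => /eqP rest0.
have := psumr_eq0P (fun p _ => exprn_ge0 2 (normr_ge0 _)) rest0 xz_notin.
by move=> /eqP; rewrite sqrf_eq0 normr_eq0.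
Qed.

Lemma stabilizer_expect_eigen phi x z : stabilizer_state phi ->
  pauli_expect phi x z != 0 -> pauli_act (ord0, x, z) phi = pauli_expect phi x z *: phi.
Proof.
move=> st /(expect_neq0_in_stab_group st) [k stab].
by rewrite (pauli_expect_stab st.1 stab); exact: stab_group_eigen.
Qed.

Lemma stabilizer_expect_le1 phi x z : stabilizer_state phi ->
  (-1) ^+ bdot z x = 1 :> C -> pauli_expect phi x z <= 1.
Proof.
move=> st sign1; set a := pauli_expect phi x z.
have [->|a_neq0] := eqVneq a 0; first exact: ler01.
have eig := stabilizer_expect_eigen st a_neq0.
have : (a ^+ 2 - 1) *: phi == 0.
  rewrite scalerBl scale1r expr2 -scalerA -eig -pauli_actZ -eig.
  by rewrite pauli_act_sqr sign1 scale1r subrr.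
rewrite scaler_eq0 (negbTE (normalized_neq0 st.1)) orbF subr_eq0 sqrf_eq1.
by case/orP => /eqP ->; [exact: lexx | exact: le_trans (lerN10 _) ler01].
Qed.

Lemma stabilizer_expect_anticomm phi x z : stabilizer_state phi ->
  (-1) ^+ bdot z x = -1 :> C ->
  pauli_expect phi x (bzero N) = 0 \/ pauli_expect phi (bzero N) z = 0.
Proof.
move=> st sign; set a := pauli_expect phi x _; set b := pauli_expect phi _ z.
have [a0|a_neq0] := eqVneq a 0; [by left | right].
apply/eqP; apply: contraTT (normalized_neq0 st.1) => b_neq0; rewrite negbK.
have := pauli_act_XZ x z phi.
rewrite (stabilizer_expect_eigen st b_neq0) pauli_actZ (stabilizer_expect_eigen st a_neq0).
rewrite pauli_actZ (stabilizer_expect_eigen st b_neq0) sign scaleN1r !scalerA mulrC.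
move=> /eqP; rewrite -subr_eq0 opprK -scalerDl scaler_eq0 -mulr2n mulrn_eq0 /=.
by rewrite mulf_eq0 (negbTE a_neq0) (negbTE b_neq0).
Qed.

Lemma stabilizer_state_of_inj phi (F : bits N -> pauli N) : inner phi phi = 1 ->
  injective F -> (forall c, F c \in stab_group phi) -> stabilizer_state phi.
Proof.
move=> phi1 F_inj F_stab; split=> //; apply/eqP; rewrite eqn_leq card_stab_group_le //=.
rewrite -card_bits -cardsT -(card_imset _ F_inj); apply: subset_leq_card.
by apply/subsetP => _ /imsetP [c _ ->]; exact: F_stab.
Qed.

Definition zero_state : qstate R N := [ffun c => (c == bzero N)%:R].

Lemma zero_state_stab z : (ord0, bzero N, z) \in stab_group zero_state.
Proof.
rewrite inE; apply/eqP/ffunP => c; rewrite pauli_act0E !ffunE bxorx0.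
by case: eqP => [->|_]; rewrite ?bdot0r ?expr0 ?mul1r ?mulr0.
Qed.

Lemma zero_state_norm : inner zero_state zero_state = 1.
Proof.
rewrite inner_selfE (bigD1 (bzero N)) //= big1 => [|c /negbTE c0].
  by rewrite ffunE eqxx normr1 expr1n addr0.
by rewrite ffunE c0 normr0 expr0n.
Qed.

Lemma zero_state_stabilizer : stabilizer_state zero_state.
Proof.
apply: (stabilizer_state_of_inj zero_state_norm _ zero_state_stab).
by move=> z1 z2 [].
Qed.

Definition plus_state : qstate R N := [ffun => sqrtC (2 ^ N)%:R^-1].

Lemma plus_state_stab x : (ord0, x, bzero N) \in stab_group plus_state.
Proof. by rewrite inE; apply/eqP/ffunP => c; rewrite pauli_act0E !ffunE bdot0l mul1r. Qed.

Lemma plus_state_norm : inner plus_state plus_state = 1.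
Proof.
rewrite inner_selfE (eq_bigr (fun _ => (2 ^ N)%:R^-1)) => [|c _]; last first.
  by rewrite ffunE ger0_norm ?sqrtC_ge0 ?invr_ge0 ?ler0n // sqrtCK.
by rewrite sumr_const card_bits -[X in X = 1]mulr_natl mulfV // pnatr_eq0 expn_eq0.
Qed.

Lemma plus_state_stabilizer : stabilizer_state plus_state.
Proof.
apply: (stabilizer_state_of_inj plus_state_norm _ plus_state_stab).
by move=> x1 x2 [].
Qed.

End Pauli.

Section EdgeFunction.
Variables (N : nat) (e : rel 'I_N).

Lemma edgefun0 : edgefun e 0 = 0%N.
Proof.
apply/eqP; rewrite -leqn0; apply/bigmax_leqP => S; rewrite leqn0 cards_eq0 => /eqP ->.
by rewrite leqn0 cards_eq0; apply/eqP/setP => p; rewrite !inE !andbF.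
Qed.

Lemma card_edges_in_le_edgefun B : (#|edges_in e B| <= edgefun e #|B|)%N.
Proof. exact: (leq_bigmax_cond (P := fun S : {set 'I_N} => #|S| <= #|B|)%N). Qed.

Lemma edgefun_full : edgefun e N = #|edges e|.
Proof.
apply/eqP; rewrite eqn_leq; apply/andP; split.
  apply/bigmax_leqP => S _; apply: subset_leq_card.
  by apply/subsetP => p; rewrite inE => /andP [].
have -> : edges e = edges_in e setT by apply/setP => p; rewrite !inE /= !andbT.
by have := card_edges_in_le_edgefun setT; rewrite cardsT card_ord.
Qed.

Lemma edgefun_le_density (F : numFieldType) : (0 < N)%N ->
    (forall n, (0 < n)%N -> (n < N)%N ->
       (edgefun e n)%:R / n%:R <= (edgefun e N)%:R / N%:R :> F) ->
  forall m, (m <= N)%N -> (edgefun e m)%:R <= m%:R * ((edgefun e N)%:R / N%:R) :> F.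
Proof.
move=> N_gt0 density m; rewrite leq_eqVlt => /orP [/eqP ->|m_lt_N].
  by rewrite mulrC divfK // pnatr_eq0 -lt0n.
have [->|m_gt0] := posnP m; first by rewrite edgefun0 mul0r.
by rewrite mulrC -ler_pdivrMr ?ltr0n // density.
Qed.

End EdgeFunction.

Section IsingEnergy.
Variables (R : realType) (N : nat) (e : rel 'I_N) (g : R).
Local Notation C := R[i].
Implicit Types (phi psi : qstate R N) (p : 'I_N * 'I_N).

Definition zz_bits p : bits N := bxor (unit_bits p.1) (unit_bits p.2).

Lemma ZopZopE p psi : Zop p.1 (Zop p.2 psi) = pauli_act (ord0, bzero N, zz_bits p) psi.
Proof.
apply/ffunP=> c; rewrite /Zop !pauli_act0E !ffunE !bxorx0.
by rewrite /zz_bits sign_bdotDl mulrA.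
Qed.

Lemma sign_zz_unit p j : p.1 != p.2 -> (j == p.1) || (j == p.2) ->
  (-1) ^+ bdot (zz_bits p) (unit_bits j) = -1 :> C.
Proof.
move=> p12 j_in_p; rewrite bdot_unitr !ffunE.
by case/orP: j_in_p => /eqP->; rewrite eqxx ?(negbTE p12) // eq_sym (negbTE p12).
Qed.

Lemma energyE phi : energy e g phi =
  - \sum_(p in edges e) pauli_expect phi (bzero N) (zz_bits p)
  - (g%:C)%C * \sum_j pauli_expect phi (unit_bits j) (bzero N).
Proof.
rewrite /energy /ising_H innerDr !innerNr innerZr !inner_sumr.
by congr (- _ - _); apply: eq_bigr => p _; rewrite ZopZopE.
Qed.

Definition x_null phi : {set 'I_N} :=
  [set j | pauli_expect phi (unit_bits j) (bzero N) == 0].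

Lemma sum_x_expect_le phi : stabilizer_state phi ->
  \sum_j pauli_expect phi (unit_bits j) (bzero N) <= #|~: x_null phi|%:R.
Proof.
move=> st; rewrite -sumr_const [X in _ <= X]big_mkcond /=; apply: ler_sum => j _.
rewrite !inE; case: eqP => [->|_] //=.
by apply: stabilizer_expect_le1; rewrite // bdot0l.
Qed.

Lemma sum_zz_expect_le phi : stabilizer_state phi ->
  \sum_(p in edges e) pauli_expect phi (bzero N) (zz_bits p)
    <= #|edges_in e (x_null phi)|%:R.
Proof.
move=> st; rewrite -sumr_const [X in _ <= X]big_mkcond [X in X <= _]big_mkcond /=.
apply: ler_sum => p _; rewrite [p \in edges_in _ _]inE.
case: ifP => //= p_edge; case: ifP => [_|].
  by apply: stabilizer_expect_le1; rewrite // bdot0r.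
(* an endpoint j outside x_null has <X_j> <> 0, and X_j anticommutes with Z_p1 Z_p2 *)
have p12 : p.1 != p.2.
  by move: p_edge; rewrite inE => /andP [lt12 _]; rewrite neq_ltn lt12.
move=> /negbT; rewrite negb_and !inE => /orP j_out.
have [j j_in_p xj_neq0] : exists2 j, (j == p.1) || (j == p.2) &
    pauli_expect phi (unit_bits j) (bzero N) != 0.
  by case: j_out => xj; [exists p.1; rewrite ?eqxx | exists p.2; rewrite ?eqxx ?orbT].
case: (stabilizer_expect_anticomm st (sign_zz_unit p12 j_in_p)) => [xj0|->] //.
by rewrite xj0 eqxx in xj_neq0.
Qed.

Lemma stabilizer_energy_ge phi : 0 <= g -> stabilizer_state phi ->
  exists2 m, (m <= N)%N &
    ((- (edgefun e m)%:R - g * (N - m)%:R)%:C)%C <= energy e g phi.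
Proof.
move=> g_ge0 st; exists #|x_null phi|.
  by have := max_card (mem (x_null phi)); rewrite card_ord.
rewrite energyE rmorphB rmorphN rmorphM /= !rmorph_nat.
apply: lerB.
  rewrite lerN2 (le_trans (sum_zz_expect_le st)) //.
  by rewrite ler_nat card_edges_in_le_edgefun.
have card_compl : (N - #|x_null phi|)%N = #|~: x_null phi|.
  by rewrite [RHS]cardsCs setCK card_ord.
by rewrite card_compl ler_wpM2l ?lecR ?sum_x_expect_le.
Qed.

Lemma is_min_stab_energy_witness v phi : 0 <= g -> stabilizer_state phi ->
  energy e g phi = (v%:C)%C ->
  (forall m, (m <= N)%N -> v <= - (edgefun e m)%:R - g * (N - m)%:R) ->
  is_min_stab_energy e g v.
Proof.
move=> g_ge0 st E_phi v_le; split; first by exists phi.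
move=> psi /(stabilizer_energy_ge g_ge0) [m m_le_N]; apply: le_trans.
by rewrite lecR v_le.
Qed.

Lemma zero_state_energy : energy e g (zero_state R N) = - #|edges e|%:R.
Proof.
have z1 z : pauli_expect (zero_state R N) (bzero N) z = 1.
  by rewrite (pauli_expect_stab (zero_state_norm R N) (zero_state_stab R z)) conjC1.
have x0 j : pauli_expect (zero_state R N) (unit_bits j) (bzero N) = 0.
  have sign : (-1) ^+ bdot (unit_bits j) (unit_bits j) = -1 :> C.
    by rewrite bdot_unitl ffunE eqxx expr1.
  case: (stabilizer_expect_anticomm (zero_state_stabilizer R N) sign) => // zj0.
  by move: (z1 (unit_bits j)); rewrite zj0 => /eqP; rewrite eq_sym oner_eq0.
rewrite energyE (eq_bigr (fun _ => 1)) => [|p _]; last exact: z1.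
rewrite [X in _ * X]big1 => [|j _]; last exact: x0.
by rewrite sumr_const mulr0 subr0.
Qed.

Lemma plus_state_energy : energy e g (plus_state R N) = - ((g%:C)%C * N%:R).
Proof.
have x1 j : pauli_expect (plus_state R N) (unit_bits j) (bzero N) = 1.
  by rewrite (pauli_expect_stab (plus_state_norm R N) (plus_state_stab R _)) conjC1.
have zz0 p : p \in edges e -> pauli_expect (plus_state R N) (bzero N) (zz_bits p) = 0.
  rewrite inE => /andP [lt12 _]; have p12 : p.1 != p.2 by rewrite neq_ltn lt12.
  have sign : (-1) ^+ bdot (zz_bits p) (unit_bits p.1) = -1 :> C.
    by rewrite sign_zz_unit ?eqxx.
  have := stabilizer_expect_anticomm (plus_state_stabilizer R N) sign.
  by rewrite x1 => -[/eqP|//]; rewrite oner_eq0.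
rewrite energyE big1 => [|p]; last exact: zz0.
rewrite (eq_bigr (fun _ => 1)) => [|j _]; last exact: x1.
by rewrite sumr_const card_ord oppr0 sub0r.
Qed.

End IsingEnergy.

Lemma max_affine_lower_bound (F : realFieldType) (t g a : F) (m N : nat) :
  (m <= N)%N -> a <= m%:R * t ->
  - (Num.max t g * N%:R) <= - a - g * (N - m)%:R.
Proof.
move=> m_le_N a_le; rewrite -opprD lerN2.
rewrite -[N in X in _ <= X](subnK m_le_N) natrD mulrDr [X in _ <= X]addrC.
apply: lerD; first by rewrite mulrC (le_trans a_le) // ler_wpM2l ?ler0n ?le_max ?lexx.
by rewrite ler_wpM2r ?ler0n ?le_max ?lexx ?orbT.
Qed.

Theorem mainTheorem8 (R : realType) (N : nat) (e : rel 'I_N) (g : R) :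
  simple_graph e ->
  (0 < N)%N ->
  (forall n : nat, (0 < n)%N -> (n < N)%N ->
     (edgefun e n)%:R / n%:R <= (edgefun e N)%:R / N%:R :> R) ->
  0 <= g ->
  ((exists2 n : nat, (n < N)%N &
      ((edgefun e N)%:R - (edgefun e n)%:R) / (N - n)%:R
        = (edgefun e N)%:R / N%:R :> R) /\
   (forall n : nat, (n < N)%N ->
      (edgefun e N)%:R / N%:R
        <= ((edgefun e N)%:R - (edgefun e n)%:R) / (N - n)%:R :> R)) /\
  (g <= (edgefun e N)%:R / N%:R -> is_min_stab_energy e g (- (edgefun e N)%:R)) /\
  ((edgefun e N)%:R / N%:R <= g -> is_min_stab_energy e g (- (g * N%:R))).
Proof.
(* [edges] lists each edge once as (i, j) with i < j. *)
move=> _ N_gt0 density g_ge0; have Em := edgefun_le_density N_gt0 density.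
set t := (edgefun e N)%:R / N%:R in Em *.
have EN : (edgefun e N)%:R = t * N%:R by rewrite divfK // pnatr_eq0 -lt0n.
have bound m : (m <= N)%N ->
    - (Num.max t g * N%:R) <= - (edgefun e m)%:R - g * (N - m)%:R.
  by move=> m_le_N; exact: max_affine_lower_bound m_le_N (Em m m_le_N).
split; [split | split => g_t].
- by exists 0%N; rewrite ?edgefun0 ?subr0 ?subn0.
- move=> n n_lt_N; have n_le_N := ltnW n_lt_N.
  rewrite ler_pdivlMr ?ltr0n ?subn_gt0 // (natrB _ n_le_N) mulrBr -EN lerD2l lerN2 mulrC.
  exact: Em.
- apply: (is_min_stab_energy_witness g_ge0 (zero_state_stabilizer R N)).
    by rewrite zero_state_energy rmorphN rmorph_nat edgefun_full.
  by move=> m m_le_N; have := bound m m_le_N; rewrite max_l // -EN.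
- apply: (is_min_stab_energy_witness g_ge0 (plus_state_stabilizer R N)).
    by rewrite plus_state_energy rmorphN rmorphM rmorph_nat.
  by move=> m m_le_N; have := bound m m_le_N; rewrite max_r.
Qed.
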